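(* Let $m,n\ge 1$, $k=\min(m,n)$, and let $M^\star\in\mathbb{R}^{m\times n}$ have singular value decomposition $M^\star=P\Sigma Q^\top$ with $P\in\mathbb{R}^{m\times k}$, $Q\in\mathbb{R}^{n\times k}$ having orthonormal columns $p_i,q_i$ and $\Sigma=\mathrm{diag}(\sigma_1,\dots,\sigma_k)$ with $\sigma_1>\sigma_2>\cdots>\sigma_k>0$. For $r\in\{1,\dots,k\}$ let $A_r=\sum_{i=1}^r\sigma_ip_iq_i^\top$, and for $U\in\mathbb{R}^{m\times k}$, $V\in\mathbb{R}^{n\times k}$ let $$\mathcal{E}(U,V,r)=\min_{S_r\subseteq\{1,\dots,k\},\,|S_r|=r}\bigl\|U\Pi_{S_r}V^\top-A_r\bigr\|_F^2,$$ where $\Pi_S$ is the $k\times k$ diagonal matrix with $(\Pi_S)_{ii}=1$ if $i\in S$ and $0$ otherwise. Let $(U,V)$ be any minimizer of $$\frac{1}{2^k-1}\sum_{\emptyset\neq S\subseteq\{1,\dots,k\}}\bigl\|U\Pi_SV^\top-M^\star\bigr\|_F^2,$$ and let $\lambda=\frac1k\|UV^\top\|_\star$. Then for every $r\in\{1,\dots,k\}$, $$\mathcal{E}(U,V,r)\ge\frac1k\Bigl(r\lambda-\sum_{i=1}^r\sigma_i\Bigr)^2.$$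
   Context: $\|\cdot\|_F$ is the Frobenius norm and $\|\cdot\|_\star$ the nuclear norm (sum of singular values). *)

From HB Require Import structures.
From mathcomp Require Import all_boot all_order all_algebra.
Set Implicit Arguments. Unset Strict Implicit. Unset Printing Implicit Defensive.
Import Order.TTheory GRing.Theory Num.Theory.
Local Open Scope ring_scope.

Definition frob2 {R : realFieldType} {m n : nat} (A : 'M[R]_(m, n)) : R :=
  \sum_(i < m) \sum_(j < n) (A i j) ^+ 2.

Definition PiS {R : realFieldType} {k : nat} (S : {set 'I_k}) : 'M[R]_k :=
  diag_mx (\row_(i < k) (i \in S)%:R).

Definition orthonormal_cols {R : realFieldType} {m d : nat} (P : 'M[R]_(m, d)) : Prop :=
  P^T *m P = 1%:M.

Definition is_svd {R : realFieldType} {m n d : nat} (A : 'M[R]_(m, n))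
  (P : 'M[R]_(m, d)) (s : 'rV[R]_d) (Q : 'M[R]_(n, d)) : Prop :=
  [/\ orthonormal_cols P, orthonormal_cols Q, (forall i, 0 <= s 0 i)
    & A = P *m diag_mx s *m Q^T].

Definition is_nuclear_norm {R : realFieldType} {m n : nat} (A : 'M[R]_(m, n)) (x : R) : Prop :=
  exists d (P : 'M[R]_(m, d)) (s : 'rV[R]_d) (Q : 'M[R]_(n, d)),
    is_svd A P s Q /\ x = \sum_(i < d) s 0 i.

Definition avg_loss {R : realFieldType} {m n k : nat} (Mst : 'M[R]_(m, n))
  (U : 'M[R]_(m, k)) (V : 'M[R]_(n, k)) : R :=
  (2 ^ k - 1)%:R^-1 * \sum_(S : {set 'I_k} | S != set0) frob2 (U *m PiS S *m V^T - Mst).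

(* A_r = sum_{i <= r} sigma_i p_i q_i^T  (0-based indices i < r) *)
Definition Ar {R : realFieldType} {m n k : nat} (P : 'M[R]_(m, k)) (sigma : 'rV[R]_k)
  (Q : 'M[R]_(n, k)) (r : nat) : 'M[R]_(m, n) :=
  \sum_(i < k | (i < r)%N) sigma 0 i *: (col i P *m (col i Q)^T).

From HB Require Import structures.
From mathcomp Require Import all_boot all_order all_algebra.
From mathcomp Require Import ring lra.
Import Order.TTheory GRing.Theory Num.Theory.
Local Open Scope ring_scope.

Set Implicit Arguments. Unset Strict Implicit. Unset Printing Implicit Defensive.

(* Averaging the loss over all column subsets S turns it into an increasing affine function
   of the dropout objective |U V^T - 2M|^2 + sum_l |u_l|^2 |v_l|^2, so (U, V) minimises the
   latter. Its first-order conditions make (U V^T)^T M and U V^T M^T symmetric; since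
   M = P Sigma Q^T has distinct singular values, U V^T = P diag(y) Q^T is diagonal in the
   singular bases. Mixing two columns of U by an invertible 2x2 matrix and the matching columns
   of V by its inverse transpose keeps U V^T, hence cannot decrease the regulariser; this forces
   all the products |u_l|^2 |v_l|^2 to be equal. In the coordinates X = P^T U, Z = Q^T V the
   first-order conditions then give every column the same alignment <P^T u_l, Q^T v_l> = lambda
   and y >= 0, so |U V^T|_* = sum y = tr (X^T Z) = k lambda. Finally
   <U Pi_S V^T - A_r, P Q^T> = r lambda - sum_(i <= r) sigma_i while |P Q^T|^2 = k, and
   Cauchy-Schwarz gives the bound. *)

Lemma quad_ge0_sqr_le (R : realFieldType) (a b c : R) :
  0 <= b -> (forall t, 0 <= c + 2 * a * t + b * t ^+ 2) -> a ^+ 2 <= b * c.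
Proof.
move=> b_ge0 quad_ge0; have [b0|b_neq0] := eqVneq b 0.
  have [->|a_neq0] := eqVneq a 0; first by rewrite expr0n b0 mul0r.
  have := quad_ge0 (- (`|c| + 1) / (2 * a)).
  have -> : c + 2 * a * (- (`|c| + 1) / (2 * a)) + b * (- (`|c| + 1) / (2 * a)) ^+ 2
            = c - (`|c| + 1) by rewrite b0; field.
  by have := ler_norm c; lra.
have b_gt0 : 0 < b by rewrite lt_def b_neq0.
have := quad_ge0 (- a / b).
have -> : c + 2 * a * (- a / b) + b * (- a / b) ^+ 2 = (b * c - a ^+ 2) / b by field.
by rewrite pmulr_lge0 ?invr_gt0 // subr_ge0.
Qed.

Lemma quad_ge0_lin_eq0 (R : realFieldType) (a b : R) :
  0 <= b -> (forall t, 0 <= 2 * a * t + b * t ^+ 2) -> a = 0.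
Proof.
move=> b_ge0 quad_ge0.
have : a ^+ 2 <= b * 0 by apply: quad_ge0_sqr_le => // t; rewrite add0r.
by rewrite mulr0 => a2_le0; apply/eqP; rewrite -sqrf_eq0 eq_le a2_le0 sqr_ge0.
Qed.

Section FrobeniusInnerProduct.
Variable R : realFieldType.

Definition mxdot m n (X Y : 'M[R]_(m, n)) : R := \tr (X^T *m Y).

Section Bilinear.
Variables m n : nat.
Implicit Types X Y Z : 'M[R]_(m, n).

Lemma mxdotC X Y : mxdot X Y = mxdot Y X.
Proof. by rewrite /mxdot -mxtrace_tr trmx_mul trmxK. Qed.

Lemma mxdotDr X Y Z : mxdot X (Y + Z) = mxdot X Y + mxdot X Z.
Proof. by rewrite /mxdot mulmxDr mxtraceD. Qed.

Lemma mxdotZr a X Y : mxdot X (a *: Y) = a * mxdot X Y.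
Proof. by rewrite /mxdot -scalemxAr mxtraceZ. Qed.

Lemma mxdotBr X Y Z : mxdot X (Y - Z) = mxdot X Y - mxdot X Z.
Proof. by rewrite -scaleN1r mxdotDr mxdotZr mulN1r. Qed.

Lemma mxdotDl X Y Z : mxdot (X + Y) Z = mxdot X Z + mxdot Y Z.
Proof. by rewrite mxdotC mxdotDr !(mxdotC Z). Qed.

Lemma mxdotZl a X Y : mxdot (a *: X) Y = a * mxdot X Y.
Proof. by rewrite mxdotC mxdotZr mxdotC. Qed.

Lemma mxdotBl X Y Z : mxdot (X - Y) Z = mxdot X Z - mxdot Y Z.
Proof. by rewrite mxdotC mxdotBr !(mxdotC Z). Qed.

Lemma mxdot_trmx X Y : mxdot X^T Y^T = mxdot X Y.
Proof. by rewrite /mxdot trmxK -mxtrace_tr trmx_mul trmxK mxtrace_mulC. Qed.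

Lemma frob2E X : frob2 X = mxdot X X.
Proof.
rewrite /frob2 /mxdot /mxtrace exchange_big; apply: eq_bigr => j _.
by rewrite mxE; apply: eq_bigr => i _; rewrite mxE expr2.
Qed.

Lemma frob2B X Y : frob2 (X - Y) = frob2 X - 2 * mxdot X Y + frob2 Y.
Proof. by rewrite !frob2E !(mxdotBl, mxdotBr) (mxdotC Y X); ring. Qed.

Lemma frob2D X Y : frob2 (X + Y) = frob2 X + 2 * mxdot X Y + frob2 Y.
Proof. by rewrite !frob2E !(mxdotDl, mxdotDr) (mxdotC Y X); ring. Qed.

Lemma frob2Z a X : frob2 (a *: X) = a ^+ 2 * frob2 X.
Proof. by rewrite !frob2E mxdotZl mxdotZr mulrA -expr2. Qed.

Lemma frob2N X : frob2 (- X) = frob2 X.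
Proof. by rewrite !frob2E -scaleN1r mxdotZl mxdotZr !mulN1r opprK. Qed.

Lemma frob2_ge0 X : 0 <= frob2 X.
Proof. by apply: sumr_ge0 => i _; apply: sumr_ge0 => j _; apply: sqr_ge0. Qed.

Lemma frob2_eq0 X : frob2 X = 0 -> X = 0.
Proof.
move=> /psumr_eq0P X0; apply/matrixP => i j; rewrite mxE.
have Xi0 := X0 (fun i _ => sumr_ge0 _ (fun j _ => sqr_ge0 (X i j))) i isT.
apply/eqP; rewrite -sqrf_eq0; apply/eqP.
by apply: (psumr_eq0P _ Xi0) => // j' _; apply: sqr_ge0.
Qed.

End Bilinear.

Lemma mxdot_mull m n p (A : 'M[R]_(m, p)) (B : 'M[R]_(p, n)) (C : 'M[R]_(m, n)) :
  mxdot (A *m B) C = mxdot B (A^T *m C).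
Proof. by rewrite /mxdot trmx_mul mulmxA. Qed.

Lemma mxdot_mulr m n p (A : 'M[R]_(m, p)) (B : 'M[R]_(p, n)) (C : 'M[R]_(m, n)) :
  mxdot (A *m B) C = mxdot A (C *m B^T).
Proof. by rewrite /mxdot trmx_mul -mulmxA mxtrace_mulC mulmxA. Qed.

Lemma mxdot_sqr_le m n (X Y : 'M[R]_(m, n)) : mxdot X Y ^+ 2 <= frob2 X * frob2 Y.
Proof.
rewrite mulrC; apply: quad_ge0_sqr_le; first exact: frob2_ge0.
move=> t; have := frob2_ge0 (X + t *: Y).
by rewrite !frob2E !(mxdotDl, mxdotDr, mxdotZl, mxdotZr) (mxdotC Y X); lra.
Qed.

Lemma mxdot_col m n (A B : 'M[R]_(m, n)) i : mxdot (col i A) (col i B) = (A^T *m B) i i.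
Proof.
rewrite /mxdot /mxtrace big_ord1 !mxE; apply: eq_bigr => a _.
by rewrite !mxE.
Qed.

Lemma gramE m k (U : 'M[R]_(m, k)) i j :
  (U^T *m U) i j = \sum_r U r i * U r j.
Proof. by rewrite mxE; apply: eq_bigr => r _; rewrite mxE. Qed.

Lemma gramC m k (U : 'M[R]_(m, k)) i j :
  (U^T *m U) i j = (U^T *m U) j i.
Proof. by rewrite !gramE; apply: eq_bigr => r _; rewrite mulrC. Qed.

Lemma gram_mul_diag m k (A : 'M[R]_(m, k)) (d : 'rV[R]_k) i :
  ((A *m diag_mx d)^T *m (A *m diag_mx d)) i i = d 0 i ^+ 2 * (A^T *m A) i i.
Proof.
rewrite !gramE mulr_sumr; apply: eq_bigr => r _.
by rewrite mul_mx_diag !mxE; ring.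
Qed.

Lemma gram_diag_ge0 m n (A : 'M[R]_(m, n)) i : 0 <= (A^T *m A) i i.
Proof. by rewrite -mxdot_col -frob2E frob2_ge0. Qed.

Lemma gram_diag_sqr_le m n (A B : 'M[R]_(m, n)) i :
  (A^T *m B) i i ^+ 2 <= (A^T *m A) i i * (B^T *m B) i i.
Proof. by rewrite -!mxdot_col -!frob2E mxdot_sqr_le. Qed.

Lemma frob2_proj_le m n d (P : 'M[R]_(m, d)) (X : 'M[R]_(m, n)) :
  P^T *m P = 1%:M -> frob2 (P^T *m X) <= frob2 X.
Proof.
move=> hP; have := frob2_ge0 (X - P *m (P^T *m X)).
have dotX : mxdot X (P *m (P^T *m X)) = frob2 (P^T *m X).
  by rewrite mxdotC mxdot_mull frob2E.
have dotP : mxdot (P *m (P^T *m X)) (P *m (P^T *m X)) = frob2 (P^T *m X).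
  by rewrite mxdot_mull mulmxA hP mul1mx frob2E.
rewrite frob2E !(mxdotBl, mxdotBr) (mxdotC _ X) dotX dotP -frob2E.
by set a := frob2 X; set b := frob2 _; lra.
Qed.

Lemma mxdot_mul_diag m n k (U : 'M[R]_(m, k)) (w : 'rV[R]_k) (V : 'M[R]_(n, k))
    (M : 'M[R]_(m, n)) :
  mxdot (U *m diag_mx w *m V^T) M = \sum_l w 0 l * (U^T *m M *m V) l l.
Proof.
rewrite /mxdot !trmx_mul trmxK tr_diag_mx -!mulmxA mxtrace_mulC /mxtrace.
by apply: eq_bigr => l _; rewrite -!mulmxA mul_diag_mx mxE.
Qed.

End FrobeniusInnerProduct.

(** * Averages over column subsets *)

Lemma sum_delta_mull (R : realFieldType) k (i : 'I_k) (F : 'I_k -> R) :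
  \sum_j (i == j)%:R * F j = F i.
Proof.
rewrite (bigD1 i) //= eqxx mul1r big1 ?addr0 // => j /negbTE.
by rewrite eq_sym => ->; rewrite mul0r.
Qed.

Lemma sum_split2 (R : realFieldType) k (p q : 'I_k) (F : 'I_k -> R) : p != q ->
  \sum_l F l = F p + F q + \sum_(l | (l != p) && (l != q)) F l.
Proof.
move=> pq; rewrite (bigD1 p) //= (bigD1 q) 1?eq_sym //= addrA.
by congr (_ + _); apply: eq_bigl => l; rewrite andbC.
Qed.

Section SubsetSums.
Variables (R : realFieldType) (k : nat).
Implicit Types (S : {set 'I_k}) (i j l : 'I_k).

Definition set_toggle j S := if j \in S then S :\ j else j |: S.

Lemma in_set_toggle j l S :
  (l \in set_toggle j S) = (if l == j then j \notin S else l \in S).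
Proof.
by rewrite /set_toggle; case: ifP => jS; rewrite !inE; case: eqP => [->|] //=; rewrite jS.
Qed.

Lemma set_toggleK j : involutive (set_toggle j).
Proof.
move=> S; apply/setP => l; rewrite !in_set_toggle.
by case: eqP => [->|//]; rewrite eqxx negbK.
Qed.

Lemma sum_set_toggle j (F : {set 'I_k} -> R) :
  \sum_(S : {set 'I_k}) F S = \sum_(S : {set 'I_k}) F (set_toggle j S).
Proof. exact: (reindex_inj (inv_inj (set_toggleK j))). Qed.

Lemma sum_subsets1 : \sum_(S : {set 'I_k}) (1 : R) = (2 ^ k)%:R.
Proof. by rewrite sumr_const -cardsT -powersetT card_powerset cardsT card_ord. Qed.

Lemma sum_subsets_mem l : 2 * \sum_(S : {set 'I_k}) ((l \in S)%:R : R) = (2 ^ k)%:R.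
Proof.
rewrite mulr2n mulrDl mul1r {2}(sum_set_toggle l) -big_split -sum_subsets1 /=.
by apply: eq_bigr => S _; rewrite in_set_toggle eqxx; case: (l \in S); rewrite ?addr0 ?add0r.
Qed.

Lemma sum_subsets_mem2 i j :
  4 * \sum_(S : {set 'I_k}) ((i \in S)%:R * (j \in S)%:R : R)
  = (2 ^ k)%:R * (1 + (i == j)%:R).
Proof.
rewrite -(sum_subsets_mem i); have [<-|ij] := eqVneq i j.
  under eq_bigr do rewrite -natrM mulnb andbb.
  by rewrite mulr1n; ring.
rewrite mulr0n addr0 mulr1.
suff pair : 2 * \sum_(S : {set 'I_k}) ((i \in S)%:R * (j \in S)%:R : R)
            = \sum_(S : {set 'I_k}) (i \in S)%:R by rewrite -pair; ring.
rewrite mulr2n mulrDl mul1r {2}(sum_set_toggle j) -big_split /=.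
apply: eq_bigr => S _; rewrite !in_set_toggle eqxx (negbTE ij).
by case: (i \in S); case: (j \in S); rewrite /= ?mulr0 ?mulr1 ?addr0 ?add0r.
Qed.

End SubsetSums.

Section DropoutObjective.
Variable R : realFieldType.

Definition colsq m k (U : 'M[R]_(m, k)) : 'rV[R]_k := \row_l (U^T *m U) l l.

Definition dropout_reg m n k (U : 'M[R]_(m, k)) (V : 'M[R]_(n, k)) : R :=
  \sum_l colsq U 0 l * colsq V 0 l.

Definition dropout_obj m n k (U : 'M[R]_(m, k)) (V : 'M[R]_(n, k)) (M : 'M[R]_(m, n)) : R :=
  frob2 (U *m V^T - 2 *: M) + dropout_reg U V.

Lemma colsqE m k (U : 'M[R]_(m, k)) l : colsq U 0 l = (U^T *m U) l l.
Proof. by rewrite mxE. Qed.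

Lemma colsq_ge0 m k (U : 'M[R]_(m, k)) l : 0 <= colsq U 0 l.
Proof. by rewrite mxE gram_diag_ge0. Qed.

Lemma colsq_eq0 m k (U : 'M[R]_(m, k)) i :
  colsq U 0 i = 0 -> forall r, U r i = 0.
Proof.
rewrite colsqE gramE => /psumr_eq0P U0 r; apply/eqP; rewrite -sqrf_eq0 expr2.
by rewrite U0 // => r' _; rewrite -expr2 sqr_ge0.
Qed.

Lemma dropout_reg_mxdot m n k (U : 'M[R]_(m, k)) (V : 'M[R]_(n, k)) :
  dropout_reg U V = mxdot (U *m diag_mx (colsq V)) U.
Proof.
rewrite /mxdot trmx_mul tr_diag_mx -mulmxA /mxtrace; apply: eq_bigr => l _.
by rewrite mul_diag_mx [in RHS]mxE [colsq U _ _]mxE mulrC.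
Qed.

Lemma dropout_reg_ge0 m n k (U : 'M[R]_(m, k)) (V : 'M[R]_(n, k)) : 0 <= dropout_reg U V.
Proof. by apply: sumr_ge0 => l _; rewrite mulr_ge0 ?colsq_ge0. Qed.

Lemma dropout_obj_tr m n k (U : 'M[R]_(m, k)) (V : 'M[R]_(n, k)) (M : 'M[R]_(m, n)) :
  dropout_obj U V M = dropout_obj V U M^T.
Proof.
rewrite /dropout_obj /dropout_reg !frob2E -mxdot_trmx linearB /= trmx_mul trmxK linearZ.
by congr (_ + _); apply: eq_bigr => l _; rewrite mulrC.
Qed.

Section Expansion.
Variables (m n k : nat) (U : 'M[R]_(m, k)) (V : 'M[R]_(n, k)) (M : 'M[R]_(m, n)).

Lemma mulmx_diag_const1 : U *m diag_mx (const_mx 1) *m V^T = U *m V^T.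
Proof. by rewrite diag_const_mx mulmx1. Qed.

Lemma frob2_mul_diag (w : 'rV[R]_k) :
  frob2 (U *m diag_mx w *m V^T)
  = \sum_i \sum_j w 0 i * w 0 j * ((U^T *m U) i j * (V^T *m V) j i).
Proof.
rewrite frob2E mxdot_mul_diag; apply: eq_bigr => i _.
have -> : U^T *m (U *m diag_mx w *m V^T) *m V = U^T *m U *m (diag_mx w *m (V^T *m V)).
  by rewrite !mulmxA.
rewrite mxE mulr_sumr; apply: eq_bigr => j _.
by rewrite mul_diag_mx mxE; ring.
Qed.

Lemma frob2_mul_tr :
  frob2 (U *m V^T) = \sum_i \sum_j (U^T *m U) i j * (V^T *m V) j i.
Proof.
rewrite -[U *m V^T]mulmx_diag_const1 frob2_mul_diag.
by apply: eq_bigr => i _; apply: eq_bigr => j _; rewrite !mxE !mul1r.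
Qed.

Lemma mxdot_mul_tr : mxdot (U *m V^T) M = \sum_l (U^T *m M *m V) l l.
Proof.
rewrite -mulmx_diag_const1 mxdot_mul_diag.
by apply: eq_bigr => l _; rewrite mxE mul1r.
Qed.

Lemma sum_subsets_frob2 :
  4 * \sum_(S : {set 'I_k}) frob2 (U *m PiS S *m V^T)
  = (2 ^ k)%:R * (frob2 (U *m V^T) + dropout_reg U V).
Proof.
under eq_bigr do rewrite frob2_mul_diag.
rewrite exchange_big; under eq_bigr do rewrite exchange_big.
transitivity (\sum_i \sum_j (2 ^ k)%:R * (1 + (i == j)%:R) * ((U^T *m U) i j * (V^T *m V) j i)).
  rewrite mulr_sumr; apply: eq_bigr => i _; rewrite mulr_sumr; apply: eq_bigr => j _.
  by rewrite -mulr_suml mulrA; under eq_bigr do rewrite !mxE; rewrite sum_subsets_mem2.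
rewrite frob2_mul_tr /dropout_reg mulrDr !mulr_sumr -big_split; apply: eq_bigr => i _.
rewrite /= [colsq U 0 i]mxE [colsq V 0 i]mxE.
rewrite -(sum_delta_mull i (fun j => (U^T *m U) i j * (V^T *m V) j i)).
by rewrite !mulr_sumr -big_split; apply: eq_bigr => j _ /=; ring.
Qed.

Lemma sum_subsets_mxdot :
  2 * \sum_(S : {set 'I_k}) mxdot (U *m PiS S *m V^T) M = (2 ^ k)%:R * mxdot (U *m V^T) M.
Proof.
under eq_bigr do rewrite mxdot_mul_diag.
rewrite exchange_big mxdot_mul_tr !mulr_sumr; apply: eq_bigr => l _.
by rewrite -mulr_suml mulrA; under eq_bigr do rewrite mxE; rewrite sum_subsets_mem.
Qed.

Lemma sum_subsets_loss :
  4 * \sum_(S : {set 'I_k}) frob2 (U *m PiS S *m V^T - M) = (2 ^ k)%:R * dropout_obj U V M.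
Proof.
under eq_bigr do rewrite frob2B.
rewrite !big_split /= sumrN -mulr_sumr.
have -> : \sum_(S : {set 'I_k}) frob2 M = (2 ^ k)%:R * frob2 M.
  by rewrite -sum_subsets1 mulr_suml; apply: eq_bigr => S _; rewrite mul1r.
move: sum_subsets_frob2 sum_subsets_mxdot.
set F := \sum_S frob2 _; set D := \sum_S mxdot _ _ => sF sD.
rewrite /dropout_obj frob2B mxdotZr [frob2 (2 *: M)]frob2E mxdotZl mxdotZr -frob2E.
have -> : 4 * (F - 2 * D + (2 ^ k)%:R * frob2 M)
          = 4 * F - 4 * (2 * D) + 4 * (2 ^ k)%:R * frob2 M by ring.
by rewrite sF sD; ring.
Qed.

End Expansion.

Lemma PiS0 k : PiS set0 = 0 :> 'M[R]_k.
Proof. by apply/matrixP => i j; rewrite !mxE in_set0 mul0rn. Qed.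

Lemma exp2_gt1 k : (0 < k)%N -> 1 < (2 ^ k)%:R :> R.
Proof. by move=> k_gt0; rewrite ltr1n -{1}(expn0 2) ltn_exp2l. Qed.

Lemma avg_lossE m n k (U : 'M[R]_(m, k)) (V : 'M[R]_(n, k)) (M : 'M[R]_(m, n)) :
  (0 < k)%N ->
  avg_loss M U V = ((2 ^ k)%:R * dropout_obj U V M - 4 * frob2 M) / (4 * ((2 ^ k)%:R - 1)).
Proof.
move=> k_gt0; rewrite /avg_loss natrB ?expn_gt0 //.
have := sum_subsets_loss U V M.
rewrite (bigD1 set0) //= PiS0 mulmx0 mul0mx sub0r frob2N => <-.
by field; rewrite subr_eq0 gt_eqF ?exp2_gt1.
Qed.

Lemma ler_avg_loss m n k (U U' : 'M[R]_(m, k)) (V V' : 'M[R]_(n, k)) (M : 'M[R]_(m, n)) :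
  (0 < k)%N ->
  (avg_loss M U V <= avg_loss M U' V') = (dropout_obj U V M <= dropout_obj U' V' M).
Proof.
move=> k_gt0; have N_gt1 := exp2_gt1 k_gt0.
rewrite !avg_lossE // ler_pM2r ?invr_gt0 ?mulr_gt0 ?subr_gt0 // lerD2r ler_pM2l //.
exact: lt_trans ltr01 N_gt1.
Qed.

End DropoutObjective.

(** * Critical points of the dropout objective *)

Section Stationarity.
Variables (R : realFieldType) (m n k : nat).
Variables (U : 'M[R]_(m, k)) (V : 'M[R]_(n, k)) (M : 'M[R]_(m, n)).

Lemma dropout_obj_shiftl (E : 'M[R]_(m, k)) t :
  dropout_obj (U + t *: E) V M
  = dropout_obj U V M
    + 2 * t * mxdot ((U *m V^T - 2 *: M) *m V + U *m diag_mx (colsq V)) E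
    + t ^+ 2 * (frob2 (E *m V^T) + dropout_reg E V).
Proof.
set D := diag_mx (colsq V); set A := U *m V^T - 2 *: M.
have shift_fit : (U + t *: E) *m V^T - 2 *: M = A + t *: (E *m V^T).
  by rewrite mulmxDl -scalemxAl addrAC.
have cross_fit : mxdot A (E *m V^T) = mxdot (A *m V) E.
  by rewrite mxdotC mxdot_mulr trmxK mxdotC.
have cross_reg : mxdot (E *m D) U = mxdot (U *m D) E.
  by rewrite mxdot_mulr tr_diag_mx mxdotC.
rewrite /dropout_obj !dropout_reg_mxdot -/D shift_fit frob2D frob2Z mxdotZr cross_fit.
rewrite (mulmxDl U) -scalemxAl !(mxdotDl, mxdotDr, mxdotZl, mxdotZr) cross_reg.
by ring.
Qed.

Lemma dropout_obj_stationaryl :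
  (forall U', dropout_obj U V M <= dropout_obj U' V M) ->
  (2 *: M - U *m V^T) *m V = U *m diag_mx (colsq V).
Proof.
move=> U_min; set G := (U *m V^T - 2 *: M) *m V + U *m diag_mx (colsq V).
suff /frob2_eq0 G0 : frob2 G = 0.
  by apply/eqP; rewrite -opprB mulNmx eq_sym -subr_eq0 opprK addrC -/G G0.
rewrite frob2E; apply: (quad_ge0_lin_eq0 (b := frob2 (G *m V^T) + dropout_reg G V)).
  by rewrite addr_ge0 ?frob2_ge0 ?dropout_reg_ge0.
move=> t; have := U_min (U + t *: G); rewrite dropout_obj_shiftl.
set o := dropout_obj U V M; set d := mxdot G G; set b := _ + dropout_reg G V; lra.
Qed.

End Stationarity.

Lemma dropout_obj_stationaryr (R : realFieldType) m n k
    (U : 'M[R]_(m, k)) (V : 'M[R]_(n, k)) (M : 'M[R]_(m, n)) :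
  (forall V', dropout_obj U V M <= dropout_obj U V' M) ->
  (2 *: M - U *m V^T)^T *m U = V *m diag_mx (colsq U).
Proof.
move=> V_min; rewrite linearB /= linearZ /= trmx_mul trmxK.
by apply: dropout_obj_stationaryl => V'; rewrite -!dropout_obj_tr.
Qed.

Section MixColumns.
Variables (R : realFieldType) (k : nat) (p q : 'I_k).
Hypothesis pq : p != q.

Definition mix_cols m (U : 'M[R]_(m, k)) (a b c e : R) : 'M[R]_(m, k) :=
  \matrix_(i, l) if l == p then a * U i p + b * U i q
                 else if l == q then c * U i p + e * U i q else U i l.

Let qp : (q == p) = false. Proof. by rewrite eq_sym (negbTE pq). Qed.

Lemma mix_cols_mul_tr m n (U : 'M[R]_(m, k)) (V : 'M[R]_(n, k)) a b c e a' b' c' e' :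
    a * a' + c * c' = 1 -> b * b' + e * e' = 1 -> a * b' + c * e' = 0 -> b * a' + e * c' = 0 ->
  mix_cols U a b c e *m (mix_cols V a' b' c' e')^T = U *m V^T.
Proof.
move=> pp qq pq' qp'; apply/matrixP => i j; rewrite !mxE (sum_split2 _ pq).
rewrite [RHS](sum_split2 _ pq); congr (_ + _); last first.
  by apply: eq_bigr => l /andP[/negbTE lp /negbTE lq]; rewrite !mxE lp lq.
rewrite !mxE !eqxx qp.
transitivity (U i p * V j p * (a * a' + c * c') + U i q * V j q * (b * b' + e * e')
              + U i p * V j q * (a * b' + c * e') + U i q * V j p * (b * a' + e * c')).
  by ring.
by rewrite pp qq pq' qp'; ring.
Qed.

Lemma sum_sqr_lin m (x y : 'I_m -> R) (a b : R) :
  \sum_i (a * x i + b * y i) * (a * x i + b * y i)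
  = a ^+ 2 * \sum_i x i * x i + 2 * a * b * \sum_i x i * y i + b ^+ 2 * \sum_i y i * y i.
Proof. by rewrite !mulr_sumr -!big_split; apply: eq_bigr => i _ /=; ring. Qed.

Section Gram.
Variables (m : nat) (U : 'M[R]_(m, k)) (a b c e : R).
Let G := U^T *m U.
Let U' := mix_cols U a b c e.

Lemma mix_cols_gram_p : (U'^T *m U') p p = a ^+ 2 * G p p + 2 * a * b * G p q + b ^+ 2 * G q q.
Proof.
rewrite /G !gramE -sum_sqr_lin; apply: eq_bigr => r _.
by rewrite /U' !mxE eqxx.
Qed.

Lemma mix_cols_gram_q : (U'^T *m U') q q = c ^+ 2 * G p p + 2 * c * e * G p q + e ^+ 2 * G q q.
Proof.
rewrite /G !gramE -sum_sqr_lin; apply: eq_bigr => r _.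
by rewrite /U' !mxE eqxx qp.
Qed.

Lemma mix_cols_gram_id l : l != p -> l != q -> (U'^T *m U') l l = G l l.
Proof.
move=> /negbTE lp /negbTE lq; rewrite /G !gramE; apply: eq_bigr => r _.
by rewrite /U' !mxE lp lq.
Qed.

End Gram.
End MixColumns.

Section Balance.
Variables (R : realFieldType) (m n k : nat).
Variables (U : 'M[R]_(m, k)) (V : 'M[R]_(n, k)) (M : 'M[R]_(m, n)).
Hypothesis UV_min : forall (U' : 'M[R]_(m, k)) (V' : 'M[R]_(n, k)),
  dropout_obj U V M <= dropout_obj U' V' M.
Let G := U^T *m U.
Let H := V^T *m V.

Lemma dropout_reg_min (U' : 'M[R]_(m, k)) (V' : 'M[R]_(n, k)) :
  U' *m V'^T = U *m V^T -> dropout_reg U V <= dropout_reg U' V'.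
Proof. by move=> same; have := UV_min U' V'; rewrite /dropout_obj same lerD2l. Qed.

(* (U', V') = (U A, V A^-T) for the mixing A = [1 x; y 1] of columns p and q: same product,
   hence a larger regulariser. *)
Lemma gram_pair_mix_ge p q x y : p != q -> x * y != 1 ->
  (1 - x * y) ^+ 2 * (G p p * H p p + G q q * H q q)
  <= (G p p + 2 * y * G p q + y ^+ 2 * G q q) * (H p p - 2 * x * H p q + x ^+ 2 * H q q)
   + (x ^+ 2 * G p p + 2 * x * G p q + G q q) * (y ^+ 2 * H p p - 2 * y * H p q + H q q).
Proof.
move=> pq xy_neq1; set d := 1 - x * y.
have d_neq0 : d != 0 by rewrite subr_eq0 eq_sym.
set U' := mix_cols p q U 1 y x 1.
set V' := mix_cols p q V d^-1 (- x / d) (- y / d) d^-1.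
have same : U' *m V'^T = U *m V^T.
  by apply: mix_cols_mul_tr => //; rewrite /d; field.
have := dropout_reg_min same.
rewrite /dropout_reg (sum_split2 _ pq) [X in _ <= X](sum_split2 _ pq).
have -> : \sum_(l | (l != p) && (l != q)) colsq U' 0 l * colsq V' 0 l
          = \sum_(l | (l != p) && (l != q)) colsq U 0 l * colsq V 0 l.
  by apply: eq_bigr => l /andP[lp lq]; rewrite !colsqE !mix_cols_gram_id.
rewrite lerD2r !colsqE !mix_cols_gram_p // !mix_cols_gram_q // -/G -/H => reg_le.
have d2_gt0 : 0 < d ^+ 2 by rewrite exprn_even_gt0.
move: reg_le; rewrite -(ler_pM2l d2_gt0) => /le_trans; apply.
by rewrite le_eqVlt; apply/orP; left; apply/eqP; rewrite /d; field.
Qed.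

Lemma gram_cross_balance p q : p != q -> G p q * H q q = G p p * H p q.
Proof.
move=> pq; apply/eqP; rewrite -subr_eq0; apply/eqP.
apply: (quad_ge0_lin_eq0 (b := 2 * (G p p * H q q))).
  by rewrite !mulr_ge0 ?gram_diag_ge0.
move=> t; have := gram_pair_mix_ge (x := t) (y := 0) pq.
by rewrite mulr0 eq_sym oner_eq0 => /(_ isT); lra.
Qed.

(* For y = -1 the mixing inequality reads 0 <= 2 (A x^2 - B x + C), whose discriminant
   B^2 - 4 A C is the square of the imbalance. *)
Lemma gram_balanced_of_orthogonal p q : p != q -> G p q = 0 -> H p q = 0 ->
  G p p * H p p = G q q * H q q.
Proof.
move=> pq G0 H0; set A := G p p * H q q; set C := G q q * H p p.
set B := G p p * H p p + G q q * H q q.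
have [A_ge0 C_ge0] : 0 <= A /\ 0 <= C by rewrite !mulr_ge0 ?gram_diag_ge0.
have B_ge0 : 0 <= B by rewrite addr_ge0 ?mulr_ge0 ?gram_diag_ge0.
have quad : forall x, 0 <= 2 * C + 2 * (- B) * x + 2 * A * x ^+ 2.
  move=> x; have [->|x_neq] := eqVneq x (-1); first by lra.
  have := gram_pair_mix_ge (x := x) (y := -1) pq.
  rewrite mulrN1 eqr_oppLR x_neq G0 H0 => /(_ isT); rewrite /A /B /C; lra.
have disc := quad_ge0_sqr_le (mulr_ge0 (ler0n _ 2) A_ge0) quad.
have : (G p p * H p p - G q q * H q q) ^+ 2 <= 0 by move: disc; rewrite /A /B /C; lra.
by move=> sq_le0; apply/eqP; rewrite -subr_eq0 -sqrf_eq0 eq_le sq_le0 sqr_ge0.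
Qed.

Lemma gram_balanced p q : G p p * H p p = G q q * H q q.
Proof.
have [-> //|pq] := eqVneq p q; have qp : q != p by rewrite eq_sym.
have balp := gram_cross_balance pq; have balq := gram_cross_balance qp.
rewrite [G q p]gramC [H q p]gramC in balq.
have [//|Delta_neq0] := eqVneq (G p p * H p p) (G q q * H q q).
have Delta_neq0' : G p p * H p p - G q q * H q q != 0 by rewrite subr_eq0.
apply: gram_balanced_of_orthogonal => //; apply: (mulIf Delta_neq0'); rewrite mul0r.
  transitivity (G p p * (G p q * H p p) - G q q * (G p q * H q q)); first by ring.
  by rewrite balq balp; ring.
transitivity (H p p * (G p p * H p q) - H q q * (G q q * H p q)); first by ring.
by rewrite -balp -balq; ring.
Qed.

End Balance.

(** * Critical points in the singular bases of M *)

Section SymmetricStationarity.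
Variable R : realFieldType.

Lemma mul_diag_tr_sym m k (X : 'M[R]_(m, k)) d :
  (X *m diag_mx d *m X^T)^T = X *m diag_mx d *m X^T.
Proof. by rewrite !trmx_mul trmxK tr_diag_mx mulmxA. Qed.

Lemma stationary_commute m n k (U : 'M[R]_(m, k)) (V : 'M[R]_(n, k)) (M : 'M[R]_(m, n))
    (a b : 'rV[R]_k) :
  (2 *: M - U *m V^T) *m V = U *m diag_mx b ->
  (2 *: M - U *m V^T)^T *m U = V *m diag_mx a ->
  (U *m V^T)^T *m M = M^T *m (U *m V^T) /\ (U *m V^T) *m M^T = M *m (U *m V^T)^T.
Proof.
move=> statV statU; set T := U *m V^T; set N := 2 *: M - T.
have two_neq0 : (2 : R) != 0 by rewrite pnatr_eq0.
have NT : N^T *m T = V *m diag_mx a *m V^T by rewrite /T mulmxA statU.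
have TN : T *m N^T = U *m diag_mx b *m U^T.
  by rewrite /T -mulmxA -trmx_mul statV trmx_mul tr_diag_mx mulmxA.
have symL : (N^T *m T)^T = N^T *m T by rewrite NT mul_diag_tr_sym.
have symR : (T *m N^T)^T = T *m N^T by rewrite TN mul_diag_tr_sym.
split; apply: (scalerI two_neq0).
  move: symL; rewrite trmx_mul trmxK /N !linearB /= !linearZ /= mulmxBl -scalemxAl.
  by move=> /addIr.
move: symR; rewrite trmx_mul trmxK /N !linearB /= !linearZ /= mulmxBl -scalemxAl.
by move=> /addIr.
Qed.

End SymmetricStationarity.

Lemma mulmx_diag_inj (R : realFieldType) m k (s : 'rV[R]_k) (A B : 'M[R]_(m, k)) :
  (forall i, s 0 i != 0) -> A *m diag_mx s = B *m diag_mx s -> A = B.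
Proof.
move=> s_neq0 /matrixP AB; apply/matrixP => i j.
by have := AB i j; rewrite !mul_mx_diag !mxE => /(mulIf (s_neq0 j)).
Qed.

Lemma diag_intertwine_is_diag (R : realFieldType) k (s : 'rV[R]_k) (Y : 'M[R]_k) :
    (forall i, 0 < s 0 i) -> (forall i j, i != j -> s 0 i != s 0 j) ->
    Y^T *m diag_mx s = diag_mx s *m Y -> Y *m diag_mx s = diag_mx s *m Y^T ->
  is_diag_mx Y.
Proof.
move=> s_gt0 s_inj /matrixP commL /matrixP commR; apply/is_diag_mxP => i j.
rewrite val_eqE => ij.
have eL : Y i j * s 0 i = s 0 j * Y j i.
  by have := commL j i; rewrite mul_mx_diag mul_diag_mx !mxE.
have eR : Y i j * s 0 j = s 0 i * Y j i.
  by have := commR i j; rewrite mul_mx_diag mul_diag_mx !mxE.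
have : (s 0 i ^+ 2 - s 0 j ^+ 2) * Y i j = 0.
  transitivity (s 0 i * (Y i j * s 0 i) - s 0 j * (Y i j * s 0 j)); first by ring.
  by rewrite eL eR; ring.
move/eqP; rewrite mulf_eq0 subr_eq0 eqrXn2 ?ltW // (negbTE (s_inj _ _ ij)) /=.
by move/eqP.
Qed.

Section SingularCoordinates.
Variables (R : realFieldType) (m n k : nat).
Variables (P : 'M[R]_(m, k)) (Q : 'M[R]_(n, k)) (sigma : 'rV[R]_k) (T : 'M[R]_(m, n)).
Hypotheses (hP : P^T *m P = 1%:M) (hQ : Q^T *m Q = 1%:M).
Hypothesis sigma_gt0 : forall i, 0 < sigma 0 i.
Let M := P *m diag_mx sigma *m Q^T.
Hypotheses (commL : T^T *m M = M^T *m T) (commR : T *m M^T = M *m T^T).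
Let Y := P^T *m T *m Q.

Lemma singular_coords_commL : Y^T *m diag_mx sigma = diag_mx sigma *m Y.
Proof.
have := congr1 (fun X => Q^T *m X *m Q) commL; rewrite /= /M /Y.
by rewrite !trmx_mul !trmxK tr_diag_mx !mulmxA -[X in X = _ -> _]mulmxA hQ mulmx1 mul1mx.
Qed.

Lemma singular_coords_commR : Y *m diag_mx sigma = diag_mx sigma *m Y^T.
Proof.
have := congr1 (fun X => P^T *m X *m P) commR; rewrite /= /M /Y.
by rewrite !trmx_mul !trmxK tr_diag_mx !mulmxA -[X in X = _ -> _]mulmxA hP mulmx1 mul1mx.
Qed.

Lemma singular_coords_is_diag :
  (forall i j, i != j -> sigma 0 i != sigma 0 j) -> is_diag_mx Y.
Proof.
move=> sigma_inj; apply: diag_intertwine_is_diag sigma_gt0 sigma_inj _ _.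
  exact: singular_coords_commL.
exact: singular_coords_commR.
Qed.

Let sigma_neq0 i : sigma 0 i != 0. Proof. by rewrite gt_eqF. Qed.

Lemma singular_coords_rangeR : T *m Q = P *m P^T *m T *m Q.
Proof.
apply: (mulmx_diag_inj sigma_neq0).
have := congr1 (fun X => X *m P) commR; rewrite /= /M !trmx_mul trmxK tr_diag_mx.
rewrite !mulmxA -[X in X = _ -> _]mulmxA hP mulmx1 -!mulmxA => e.
by rewrite e (mulmxA P^T) hP mul1mx.
Qed.

Lemma singular_coords_rangeL : T^T *m P = Q *m Q^T *m T^T *m P.
Proof.
apply: (mulmx_diag_inj sigma_neq0).
have := congr1 (fun X => X *m Q) commL; rewrite /= /M !trmx_mul trmxK tr_diag_mx.
rewrite !mulmxA -[X in X = _ -> _]mulmxA hQ mulmx1 -!mulmxA => e.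
by rewrite e (mulmxA Q^T) hQ mul1mx.
Qed.

End SingularCoordinates.

(* One of P, Q is square, hence an orthogonal matrix. *)
Lemma singular_coords_span (R : realFieldType) m n k (P : 'M[R]_(m, k)) (Q : 'M[R]_(n, k))
    (sigma : 'rV[R]_k) (T : 'M[R]_(m, n)) :
  let M := P *m diag_mx sigma *m Q^T in
  P^T *m P = 1%:M -> Q^T *m Q = 1%:M -> (forall i, 0 < sigma 0 i) ->
  T^T *m M = M^T *m T -> T *m M^T = M *m T^T -> k = m \/ k = n ->
  T = P *m (P^T *m T *m Q) *m Q^T.
Proof.
move=> M hP hQ sigma_gt0 commL commR; case=> dim_k; subst k.
  have PPT : P *m P^T = 1%:M by apply: mulmx1C.
  have := congr1 trmx (singular_coords_rangeL hQ sigma_gt0 commL).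
  rewrite !trmx_mul !trmxK !mulmxA => PT.
  by rewrite -{1}[T]mul1mx -PPT -mulmxA {1}PT !mulmxA.
have QQT : Q *m Q^T = 1%:M by apply: mulmx1C.
by rewrite -{1}[T]mulmx1 -QQT mulmxA (singular_coords_rangeR hP sigma_gt0 commR) !mulmxA.
Qed.

(* X and Z stand for P^T U and Q^T V, a and b for the squared column norms of U and V, and
   delta j for the j-th diagonal entry of P^T (2M - U V^T) Q. *)
Section Alignment.
Variables (R : realFieldType) (k : nat) (sigma a b : 'rV[R]_k) (X Z : 'M[R]_k).
Let delta j := 2 * sigma 0 j - (X *m Z^T) j j.
Hypothesis sigma_gt0 : forall j, 0 < sigma 0 j.
Hypothesis b_ge0 : forall i, 0 <= b 0 i.
Hypothesis ab_const : forall i i', a 0 i * b 0 i = a 0 i' * b 0 i'.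
Hypothesis statZ : forall j i, delta j * Z j i = X j i * b 0 i.
Hypothesis statX : forall j i, delta j * X j i = Z j i * a 0 i.
Hypothesis a0_X : forall i, a 0 i = 0 -> forall j, X j i = 0.
Hypothesis b0_Z : forall i, b 0 i = 0 -> forall j, Z j i = 0.
Hypothesis b_gramZ : forall i, a 0 i != 0 -> b 0 i = (Z^T *m Z) i i.

Lemma alignment_degenerate : (forall i, a 0 i * b 0 i = 0) -> forall j i, X j i * Z j i = 0.
Proof.
move=> ab0 j i; have /eqP := ab0 i; rewrite mulf_eq0 => /orP[/eqP/a0_X->|/eqP/b0_Z->].
  by rewrite mul0r.
by rewrite mulr0.
Qed.

Section Nondegenerate.
Hypothesis ab_neq0 : forall i, a 0 i * b 0 i != 0.

Let b_neq0 i : b 0 i != 0.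
Proof. by have := ab_neq0 i; rewrite mulf_eq0 negb_or => /andP[]. Qed.

Let a_neq0 i : a 0 i != 0.
Proof. by have := ab_neq0 i; rewrite mulf_eq0 negb_or => /andP[]. Qed.

Lemma alignment_X j i : X j i = delta j * Z j i / b 0 i.
Proof. by rewrite statZ mulfK. Qed.

Lemma alignment_delta_sqr j i : Z j i != 0 -> delta j ^+ 2 = a 0 i * b 0 i.
Proof.
move=> Z_neq0; apply: (mulIf Z_neq0).
by rewrite expr2 -mulrA statZ mulrA statX -mulrA mulrC.
Qed.

Lemma alignment_diag j : (X *m Z^T) j j = delta j * \sum_i Z j i ^+ 2 / b 0 i.
Proof.
rewrite mxE mulr_sumr; apply: eq_bigr => i _.
by rewrite mxE alignment_X; field.
Qed.

(* If delta j < 0 then (X Z^T) j j <= 0, whence delta j >= 2 sigma j > 0. *)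
Lemma alignment_delta_ge0 j : 0 <= delta j.
Proof.
rewrite leNgt; apply/negP => delta_lt0.
have w_ge0 : 0 <= \sum_i Z j i ^+ 2 / b 0 i.
  by apply: sumr_ge0 => i _; rewrite divr_ge0 ?sqr_ge0.
have : (X *m Z^T) j j <= 0 by rewrite alignment_diag nmulr_rle0.
by have := sigma_gt0 j; rewrite /delta in delta_lt0 *; lra.
Qed.

Lemma alignment_delta_const : exists d, forall j i, Z j i != 0 -> delta j = d.
Proof.
have [/existsP[j0 /existsP[i0 Z0_neq0]]|/existsP none] := boolP [exists j, exists i, Z j i != 0].
  exists (delta j0) => j i Z_neq0; apply/eqP.
  rewrite -(eqrXn2 (n := 2)) ?alignment_delta_ge0 //.
  by rewrite (alignment_delta_sqr Z_neq0) (alignment_delta_sqr Z0_neq0) (ab_const i i0).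
exists 0 => j i Z_neq0; case: none; exists j; apply/existsP; exists i; exact: Z_neq0.
Qed.

Lemma alignment_nondegenerate :
  exists lam, (forall i, (X^T *m Z) i i = lam) /\ (forall j, 0 <= (X *m Z^T) j j).
Proof.
have [d delta_d] := alignment_delta_const.
exists d; split => [i|j]; last first.
  rewrite alignment_diag mulr_ge0 ?alignment_delta_ge0 //.
  by apply: sumr_ge0 => i _; rewrite divr_ge0 ?sqr_ge0.
transitivity (\sum_j d * Z j i ^+ 2 / b 0 i).
  rewrite mxE; apply: eq_bigr => j _; rewrite mxE alignment_X.
  have [->|Z_neq0] := eqVneq (Z j i) 0; first by rewrite expr0n !(mulr0, mul0r).
  by rewrite (delta_d _ _ Z_neq0) expr2 !mulrA mulrAC.
have -> : \sum_j d * Z j i ^+ 2 / b 0 i = d * (Z^T *m Z) i i / b 0 i.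
  by rewrite gramE -mulr_suml -mulr_sumr; under eq_bigr do rewrite expr2.
by rewrite -b_gramZ ?mulfK.
Qed.

End Nondegenerate.

Lemma alignment :
  exists lam, (forall i, (X^T *m Z) i i = lam) /\ (forall j, 0 <= (X *m Z^T) j j).
Proof.
have [/forallP ab0|] := boolP [forall i, a 0 i * b 0 i == 0].
  have XZ0 := alignment_degenerate (fun i => eqP (ab0 i)).
  exists 0; split => [i|j]; rewrite mxE.
    by apply: big1 => j _; rewrite mxE XZ0.
  by rewrite big1 // => i _; rewrite mxE XZ0.
rewrite negb_forall => /existsP[i0 ab_i0]; apply: alignment_nondegenerate => i.
by rewrite (ab_const i i0).
Qed.

End Alignment.

(** * Nuclear norm and the truncation error *)

Section NuclearNorm.
Variable R : realFieldType.

Lemma gram_proj_diag_le m d d' (P : 'M[R]_(m, d)) (P' : 'M[R]_(m, d')) l :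
  P^T *m P = 1%:M -> P'^T *m P' = 1%:M -> ((P'^T *m P)^T *m (P'^T *m P)) l l <= 1.
Proof.
move=> hP hP'; rewrite -mxdot_col -frob2E colE -mulmxA -colE.
apply: le_trans (frob2_proj_le _ hP') _.
by rewrite frob2E mxdot_col hP mxE eqxx.
Qed.

Lemma orthonormal_cross_diag_le1 m n d d' (P : 'M[R]_(m, d)) (Q : 'M[R]_(n, d))
    (P' : 'M[R]_(m, d')) (Q' : 'M[R]_(n, d')) l :
  P^T *m P = 1%:M -> Q^T *m Q = 1%:M -> P'^T *m P' = 1%:M -> Q'^T *m Q' = 1%:M ->
  (P^T *m (P' *m Q'^T) *m Q) l l <= 1.
Proof.
move=> hP hQ hP' hQ'.
have -> : P^T *m (P' *m Q'^T) *m Q = (P'^T *m P)^T *m (Q'^T *m Q).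
  by rewrite trmx_mul trmxK !mulmxA.
have := gram_diag_sqr_le (P'^T *m P) (Q'^T *m Q) l.
have := gram_proj_diag_le l hP hP'; have := gram_proj_diag_le l hQ hQ'.
have := gram_diag_ge0 (P'^T *m P) l; have := gram_diag_ge0 (Q'^T *m Q) l.
nra.
Qed.

Lemma mxdot_svd_le m n d d' (T : 'M[R]_(m, n)) (P : 'M[R]_(m, d)) (s : 'rV[R]_d)
    (Q : 'M[R]_(n, d)) (P' : 'M[R]_(m, d')) (Q' : 'M[R]_(n, d')) :
  is_svd T P s Q -> P'^T *m P' = 1%:M -> Q'^T *m Q' = 1%:M ->
  mxdot T (P' *m Q'^T) <= \sum_i s 0 i.
Proof.
move=> [hP hQ s_ge0 ->] hP' hQ'; rewrite mxdot_mul_diag; apply: ler_sum => i _.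
by rewrite ler_piMr ?orthonormal_cross_diag_le1.
Qed.

Lemma mxdot_svd_self m n d (P : 'M[R]_(m, d)) (s : 'rV[R]_d) (Q : 'M[R]_(n, d)) :
  P^T *m P = 1%:M -> Q^T *m Q = 1%:M ->
  mxdot (P *m diag_mx s *m Q^T) (P *m Q^T) = \sum_i s 0 i.
Proof.
move=> hP hQ; rewrite mxdot_mul_diag; apply: eq_bigr => i _.
by rewrite !mulmxA hP mul1mx hQ mxE eqxx mulr1.
Qed.

Lemma svd_sum_unique m n d1 d2 (T : 'M[R]_(m, n))
    (P1 : 'M[R]_(m, d1)) (s1 : 'rV[R]_d1) (Q1 : 'M[R]_(n, d1))
    (P2 : 'M[R]_(m, d2)) (s2 : 'rV[R]_d2) (Q2 : 'M[R]_(n, d2)) :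
  is_svd T P1 s1 Q1 -> is_svd T P2 s2 Q2 -> \sum_i s1 0 i = \sum_i s2 0 i.
Proof.
move=> svd1 svd2; apply/eqP; rewrite eq_le.
case: (svd1) (svd2) => hP1 hQ1 _ T1 [hP2 hQ2 _ T2].
rewrite -{1}(mxdot_svd_self s1 hP1 hQ1) -{2}(mxdot_svd_self s2 hP2 hQ2) -T1 -T2.
by rewrite (mxdot_svd_le svd2 hP1 hQ1) (mxdot_svd_le svd1 hP2 hQ2).
Qed.

Lemma nuclear_norm_svd m n d (T : 'M[R]_(m, n)) (P : 'M[R]_(m, d)) (s : 'rV[R]_d)
    (Q : 'M[R]_(n, d)) x :
  is_svd T P s Q -> is_nuclear_norm T x -> x = \sum_i s 0 i.
Proof. by move=> svdT [d' [P' [s' [Q' [svdT' ->]]]]]; apply: svd_sum_unique svdT' svdT. Qed.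

End NuclearNorm.

Section TruncationBound.
Variables (R : realFieldType) (m n k : nat).
Variables (P : 'M[R]_(m, k)) (Q : 'M[R]_(n, k)) (s : 'rV[R]_k).
Hypotheses (hP : P^T *m P = 1%:M) (hQ : Q^T *m Q = 1%:M).

Lemma Ar_diag r : Ar P s Q r = P *m diag_mx (\row_i ((i < r)%N%:R * s 0 i)) *m Q^T.
Proof.
apply/matrixP => a b; rewrite /Ar summxE big_mkcond !mxE; apply: eq_bigr => l _.
rewrite mul_mx_diag !mxE big_ord1 !mxE.
by case: (l < r)%N; rewrite /= ?mul0r ?mulr0 ?mul0r //; ring.
Qed.

Lemma frob2_mul_orthonormal : frob2 (P *m Q^T) = k%:R.
Proof.
by rewrite frob2E /mxdot trmx_mul trmxK mulmxA -(mulmxA Q) hP mulmx1 mxtrace_mulC hQ mxtrace1.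
Qed.

Lemma mxdot_Ar r : mxdot (Ar P s Q r) (P *m Q^T) = \sum_(i < k | (i < r)%N) s 0 i.
Proof.
rewrite Ar_diag mxdot_svd_self // [RHS]big_mkcond; apply: eq_bigr => i _.
by rewrite mxE; case: ifP; rewrite ?mul1r ?mul0r.
Qed.

Lemma truncation_error_ge (U : 'M[R]_(m, k)) (V : 'M[R]_(n, k)) lam r (S : {set 'I_k}) :
  (forall l, ((P^T *m U)^T *m (Q^T *m V)) l l = lam) -> #|S| = r ->
  k%:R^-1 * (r%:R * lam - \sum_(i < k | (i < r)%N) s 0 i) ^+ 2
  <= frob2 (U *m PiS S *m V^T - Ar P s Q r).
Proof.
move=> aligned cardS.
have dotS : mxdot (U *m PiS S *m V^T) (P *m Q^T) = r%:R * lam.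
  rewrite mxdot_mul_diag -cardS mulr_natl -sumr_const [RHS]big_mkcond; apply: eq_bigr => i _.
  rewrite mxE -(aligned i) trmx_mul trmxK !mulmxA.
  by case: (i \in S); rewrite ?mul1r ?mul0r.
have := mxdot_sqr_le (U *m PiS S *m V^T - Ar P s Q r) (P *m Q^T).
rewrite mxdotBl dotS mxdot_Ar frob2_mul_orthonormal => CS.
have [->|k_neq0] := eqVneq (k%:R : R) 0; first by rewrite invr0 mul0r frob2_ge0.
by rewrite ler_pdivrMl ?lt_def ?k_neq0 ?ler0n // [k%:R * _]mulrC.
Qed.

End TruncationBound.

Section DropoutMinimizer.
Variables (R : realFieldType) (m n k : nat).
Variables (P : 'M[R]_(m, k)) (Q : 'M[R]_(n, k)) (sigma : 'rV[R]_k).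
Variables (U : 'M[R]_(m, k)) (V : 'M[R]_(n, k)).
Hypotheses (hP : P^T *m P = 1%:M) (hQ : Q^T *m Q = 1%:M).
Hypothesis sigma_gt0 : forall i, 0 < sigma 0 i.
Hypothesis sigma_inj : forall i j, i != j -> sigma 0 i != sigma 0 j.
Hypothesis dim_k : k = m \/ k = n.
Let M := P *m diag_mx sigma *m Q^T.
Hypothesis UV_min : forall (U' : 'M[R]_(m, k)) (V' : 'M[R]_(n, k)),
  dropout_obj U V M <= dropout_obj U' V' M.
Let X := P^T *m U.
Let Z := Q^T *m V.
Let y := \row_j (X *m Z^T) j j.

Let statV : (2 *: M - U *m V^T) *m V = U *m diag_mx (colsq V).
Proof. by apply: dropout_obj_stationaryl => U'; apply: UV_min. Qed.

Let statU : (2 *: M - U *m V^T)^T *m U = V *m diag_mx (colsq U).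
Proof. by apply: dropout_obj_stationaryr => V'; apply: UV_min. Qed.

Lemma dropout_min_coords : P^T *m (U *m V^T) *m Q = diag_mx y.
Proof.
have [commL commR] := stationary_commute statV statU.
have := singular_coords_is_diag hP hQ sigma_gt0 commL commR sigma_inj.
have -> : P^T *m (U *m V^T) *m Q = X *m Z^T by rewrite /X /Z trmx_mul trmxK !mulmxA.
move=> /diag_mxP[d XZd]; rewrite /y XZd; congr diag_mx.
by apply/rowP => j; rewrite !mxE eqxx mulr1n.
Qed.

Lemma dropout_min_svd_form : U *m V^T = P *m diag_mx y *m Q^T.
Proof.
have [commL commR] := stationary_commute statV statU.
by rewrite -dropout_min_coords -(singular_coords_span hP hQ sigma_gt0 commL commR dim_k).
Qed.

Lemma dropout_min_residual : 2 *: M - U *m V^T = P *m diag_mx (2 *: sigma - y) *m Q^T.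
Proof.
by rewrite dropout_min_svd_form /M linearB linearZ /= mulmxBr mulmxBl -scalemxAr -scalemxAl.
Qed.

Lemma dropout_min_coordsZ : diag_mx (2 *: sigma - y) *m Z = X *m diag_mx (colsq V).
Proof.
have := congr1 (mulmx P^T) statV.
by rewrite dropout_min_residual /X /Z !mulmxA hP mul1mx.
Qed.

Lemma dropout_min_rangeV :
  V *m diag_mx (colsq U) = Q *m (diag_mx (2 *: sigma - y) *m X).
Proof.
by rewrite -statU dropout_min_residual !trmx_mul trmxK tr_diag_mx /X !mulmxA.
Qed.

Lemma dropout_min_coordsX : diag_mx (2 *: sigma - y) *m X = Z *m diag_mx (colsq U).
Proof. by rewrite /Z -mulmxA dropout_min_rangeV mulmxA hQ mul1mx. Qed.

Lemma dropout_min_colsqV i : colsq U 0 i != 0 -> colsq V 0 i = (Z^T *m Z) i i.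
Proof.
move=> a_neq0.
have : (V *m diag_mx (colsq U))^T *m (V *m diag_mx (colsq U))
       = (Z *m diag_mx (colsq U))^T *m (Z *m diag_mx (colsq U)).
  by rewrite -dropout_min_coordsX dropout_min_rangeV trmx_mul -mulmxA (mulmxA Q^T) hQ mul1mx.
move/matrixP => /(_ i i); rewrite !gram_mul_diag !colsqE.
by apply: mulfI; rewrite sqrf_eq0 -colsqE.
Qed.

Lemma dropout_min_aligned :
  exists lam, (forall i, (X^T *m Z) i i = lam) /\ (forall j, 0 <= y 0 j).
Proof.
have coords_entry (A B : 'M[R]_k) (d : 'rV[R]_k) :
    diag_mx (2 *: sigma - y) *m A = B *m diag_mx d ->
    forall j i, (2 * sigma 0 j - (X *m Z^T) j j) * A j i = B j i * d 0 i.
  by move/matrixP => AB j i; have := AB j i; rewrite mul_diag_mx mul_mx_diag !mxE.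
have coords_eq0 p (A B : 'M[R]_(p, k)) i : colsq B 0 i = 0 -> forall j, (A^T *m B) j i = 0.
  by move=> /colsq_eq0 B0 j; rewrite mxE big1 // => r _; rewrite B0 mulr0.
have ab_const i i' : colsq U 0 i * colsq V 0 i = colsq U 0 i' * colsq V 0 i'.
  by rewrite !colsqE (gram_balanced UV_min i i').
have [lam [aligned XZ_ge0]] := alignment sigma_gt0 (colsq_ge0 V) ab_const
  (coords_entry _ _ _ dropout_min_coordsZ) (coords_entry _ _ _ dropout_min_coordsX)
  (coords_eq0 _ P U) (coords_eq0 _ Q V) dropout_min_colsqV.
by exists lam; split => // j; rewrite mxE.
Qed.

Lemma dropout_min_alignment :
  exists2 lam, (forall i, ((P^T *m U)^T *m (Q^T *m V)) i i = lam)
             & forall x, is_nuclear_norm (U *m V^T) x -> x = k%:R * lam.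
Proof.
have [lam [aligned y_ge0]] := dropout_min_aligned.
exists lam => // x nuc.
have svdT : is_svd (U *m V^T) P y Q by split => //; apply: dropout_min_svd_form.
rewrite (nuclear_norm_svd svdT nuc); transitivity (\tr (X^T *m Z)).
  rewrite -mxtrace_tr trmx_mul trmxK mxtrace_mulC; apply: eq_bigr => j _.
  by rewrite mxE.
by rewrite /mxtrace (eq_bigr (fun=> lam)) // sumr_const card_ord mulr_natl.
Qed.

End DropoutMinimizer.

Theorem theorem4p2 (R : realFieldType) (m n : nat) (hm : (1 <= m)%N) (hn : (1 <= n)%N)
  (P : 'M[R]_(m, minn m n)) (Q : 'M[R]_(n, minn m n)) (sigma : 'rV[R]_(minn m n))
  (Mst : 'M[R]_(m, n))
  (hP : orthonormal_cols P) (hQ : orthonormal_cols Q)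
  (hsig_pos : forall i, 0 < sigma 0 i)
  (hsig_dec : forall i j : 'I_(minn m n), (i < j)%N -> sigma 0 j < sigma 0 i)
  (hM : Mst = P *m diag_mx sigma *m Q^T)
  (U : 'M[R]_(m, minn m n)) (V : 'M[R]_(n, minn m n))
  (hmin : forall (U' : 'M[R]_(m, minn m n)) (V' : 'M[R]_(n, minn m n)),
            avg_loss Mst U V <= avg_loss Mst U' V')
  (nuc : R) (hnuc : is_nuclear_norm (U *m V^T) nuc)
  (r : nat) (hr1 : (1 <= r)%N) (hrk : (r <= minn m n)%N) :
  let k := minn m n in
  let lambda := nuc / k%:R in
  forall S : {set 'I_k}, #|S| = r ->
    frob2 (U *m PiS S *m V^T - Ar P sigma Q r)
      >= k%:R^-1 * (r%:R * lambda - \sum_(i < k | (i < r)%N) sigma 0 i) ^+ 2.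
Proof.
move=> k lambda S cardS.
have k_gt0 : (0 < k)%N by rewrite leq_min hm hn.
have dim_k : k = m \/ k = n by rewrite /k; case: leqP => _; [left | right].
have sigma_inj i j : i != j -> sigma 0 i != sigma 0 j.
  by rewrite neq_ltn => /orP[/hsig_dec/gt_eqF->|/hsig_dec/lt_eqF->].
have obj_min (U' : 'M[R]_(m, k)) (V' : 'M[R]_(n, k)) :
    dropout_obj U V Mst <= dropout_obj U' V' Mst.
  by have := hmin U' V'; rewrite ler_avg_loss.
subst Mst.
have [lam aligned nuc_eq] := dropout_min_alignment hP hQ hsig_pos sigma_inj dim_k obj_min.
have -> : lambda = lam by rewrite /lambda (nuc_eq _ hnuc) mulrC mulKf // pnatr_eq0 -lt0n.
exact: truncation_error_ge.
Qed.
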